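(* For every nonnegative integer $n$, $$\sum_{k=0}^{\infty}(-1)^k(4k+1)\,\frac{(-3n)_k\,(-n+\tfrac13)_k\,(\tfrac12)_k}{k!\,(n+\tfrac76)_k\,(3n+\tfrac32)_k}=\left(\frac{3^3}{2^8}\right)^n\frac{(\tfrac56)_n(\tfrac12)_n(\tfrac76)_n^2}{(\tfrac{25}{24})_n(\tfrac{7}{24})_n(\tfrac{13}{24})_n(\tfrac{19}{24})_n}.$$ (The sum is finite, since $(-3n)_k=0$ for $k>3n$.)
   Context: $(a)_j=\Gamma(a+j)/\Gamma(a)=a(a+1)\cdots(a+j-1)$ denotes the rising factorial (Pochhammer symbol), with $(a)_0=1$. *)

From HB Require Import structures.
From mathcomp Require Import all_boot all_order all_algebra.
Set Implicit Arguments. Unset Strict Implicit. Unset Printing Implicit Defensive.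
Import Order.TTheory GRing.Theory Num.Theory.
Local Open Scope ring_scope.

Definition poch (a : rat) (j : nat) : rat := \prod_(i < j) (a + i%:R).

Definition term5 (n k : nat) : rat :=
  (-1) ^+ k * (4 * k%:R + 1) *
  (poch (- (3 * n%:R)) k * poch (- n%:R + 1/3) k * poch (1/2) k) /
  ((k`!)%:R * poch (n%:R + 7/6) k * poch (3 * n%:R + 3/2) k).

From HB Require Import structures.
From mathcomp Require Import all_boot all_order all_algebra.
From mathcomp Require Import ring lra.
Import Order.TTheory GRing.Theory Num.Theory.
Local Open Scope ring_scope.
Set Warnings "-abstract-large-number".

(* Proof by Zeilberger's creative telescoping.  Write F(n,k) = term5 n k and
   S(n) = sum_(k <= 3n) F(n,k); the sum stops at 3n because (-3n)_k = 0 for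
   k > 3n, so every longer partial sum equals S(n).  The key identity is the
   first-order recurrence in n certified by a rational function R(x,y):

     F(n+1,k) - r(n) F(n,k) = G(n,k+1) - G(n,k),   G(n,k) = h(n+1,k) R(n,k),

   where h is the hypergeometric part of F (without the factor 4k+1) and
   r(n) = (27/256)(n+5/6)(n+1/2)(n+7/6)^2 / ((n+25/24)(n+7/24)(n+13/24)(n+19/24)).
   It is checked by expressing every Pochhammer symbol of F(n,k) through those
   of F(n+1,k) (or conversely) and normalising with [field].  Summing over k
   telescopes, since G(n,0) = 0 and G(n,3n+4) = 0, giving S(n+1) = r(n) S(n).
   The right-hand side satisfies the same recurrence with the same initial
   value S(0) = 1, which proves the theorem. *)

(* Side conditions of [field] and of the shift lemmas: each factor is nonzero
   because it is linear in quantities known to be nonnegative or positive,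
   with coefficients of constant sign. *)
Ltac nonzero := repeat (apply/andP; split);
  first [apply: lt0r_neq0; lra | apply: ltr0_neq0; lra].

Lemma poch0 (a : rat) : poch a 0 = 1.
Proof. by rewrite /poch big_ord0. Qed.

Lemma pochS (a : rat) (j : nat) : poch a j.+1 = poch a j * (a + j%:R).
Proof. by rewrite /poch big_ord_recr. Qed.

Lemma poch_shift (a : rat) (j : nat) : poch (a + 1) j * a = poch a j * (a + j%:R).
Proof.
elim: j => [|j IH]; first by rewrite !poch0 !mul1r addr0.
rewrite !pochS mulrAC IH -!mulrA; congr (_ * (_ * _)).
by rewrite -natr1 addrAC addrA.
Qed.

Lemma poch_succ (a : rat) (j : nat) :
  a != 0 -> poch (a + 1) j = poch a j * (a + j%:R) / a.
Proof. by move=> a0; rewrite -poch_shift mulfK. Qed.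

Lemma poch_gt0 (a : rat) (j : nat) : 0 < a -> 0 < poch a j.
Proof.
move=> a_gt0; elim: j => [|j IH]; first by rewrite poch0.
by rewrite pochS mulr_gt0 // ltr_wpDr.
Qed.

(* (-m)_j vanishes as soon as j > m: it contains the factor -m + m. *)
Lemma poch_negnat (m j : nat) : (m < j)%N -> poch (- m%:R) j = 0.
Proof.
elim: j => [//|j IH]; rewrite ltnS leq_eqVlt => /orP [/eqP ->|lt_mj].
- by rewrite pochS addNr mulr0.
- by rewrite pochS IH // mul0r.
Qed.

Definition hterm (n k : nat) : rat :=
  (-1) ^+ k * (poch (- (3 * n%:R)) k * poch (- n%:R + 1/3) k * poch (1/2) k) /
  ((k`!)%:R * poch (n%:R + 7/6) k * poch (3 * n%:R + 3/2) k).

Lemma term5E (n k : nat) : term5 n k = (4 * k%:R + 1) * hterm n k.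
Proof. by rewrite /term5 /hterm !mulrA [(4 * _ + 1) * _]mulrC. Qed.

Lemma hterm_vanish (n k : nat) : (3 * n < k)%N -> hterm n k = 0.
Proof. by move=> lt_k; rewrite /hterm -natrM poch_negnat // !(mul0r, mulr0). Qed.

Definition S (n : nat) : rat := \sum_(k < (3 * n).+1) term5 n k.

Lemma sum_term5_trunc (n N : nat) : (3 * n < N)%N -> \sum_(k < N) term5 n k = S n.
Proof.
move=> lt_N; rewrite -(subnKC lt_N).
elim: (N - (3 * n).+1)%N => [|d IH]; first by rewrite addn0.
by rewrite addnS big_ord_recr /= IH term5E hterm_vanish ?mulr0 ?addr0 // ltnS leq_addr.
Qed.

Definition rec_num (x : rat) : rat :=
  27/256 * (x + 5/6) * (x + 1/2) * (x + 7/6) * (x + 7/6).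
Definition rec_den (x : rat) : rat :=
  (x + 25/24) * (x + 7/24) * (x + 13/24) * (x + 19/24).
Definition cert_den (x : rat) : rat :=
  (3 * x + 1) * (3 * x + 2) * (3 * x + 3) * (x + 2/3) *
  (x + 7/6) * (3 * x + 3/2) * (3 * x + 5/2) * (3 * x + 7/2).

Definition cert_poly (x y : rat) : rat :=
    - 8265320%:R + x * (- 141674764%:R + x * (- 1060759596%:R + x * (- 4577606478%:R + x * (- 12630619980%:R + x * (- 23319303840%:R + x * (- 29214601128%:R + x * (- 24553746432%:R + x * (- 13264067520%:R + x * (- 4162928256%:R + x * (- 576948096%:R))))))))))
    + y * (- 2984835%:R + x * (- 35840742%:R + x * (- 186177258%:R + x * (- 545020056%:R + x * (- 981710604%:R + x * (- 1112905008%:R + x * (- 774839520%:R + x * (- 302750784%:R + x * (- 50808384%:R))))))))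
    + y * (5502210%:R + x * (67981872%:R + x * (360202734%:R + x * (1068882264%:R + x * (1942923672%:R + x * (2215382400%:R + x * (1547509536%:R + x * (605501568%:R + x * (101616768%:R))))))))
    + y * (1849995%:R + x * (14700924%:R + x * (48436056%:R + x * (84503088%:R + x * (81955152%:R + x * (41710464%:R + x * (8678016%:R))))))
    + y * (- 1750770%:R + x * (- 14213304%:R + x * (- 47580696%:R + x * (- 83861568%:R + x * (- 81780192%:R + x * (- 41710464%:R + x * (- 8678016%:R))))))
    + y * (- 238140%:R + x * (- 1170288%:R + x * (- 2052864%:R + x * (- 1539648%:R + x * (- 419904%:R))))
    + y * (158760%:R + x * (780192%:R + x * (1368576%:R + x * (1026432%:R + x * (279936%:R)))))))))).

(* The Zeilberger certificate R(x,y), evaluated at x = n and y = k, and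
   G(n,k) = h(n+1,k) R(n,k).  The factor y is kept outermost so that R(x,0) = 0
   is immediate. *)
Definition cert (x y : rat) : rat :=
  y * ((y + x + 7/6) * (y + 3 * x + 7/2) * cert_poly x y /
       (2 ^+ 14 * 3 ^+ 4 * rec_den x * cert_den x)).

Definition G (n k : nat) : rat := hterm n.+1 k * cert n%:R k%:R.

Lemma telescoping_identity (n k : nat) :
  term5 n.+1 k = (G n k.+1 - G n k) + rec_num n%:R / rec_den n%:R * term5 n k.
Proof.
rewrite !term5E /G /hterm /cert.
rewrite !pochS factS natrM exprS -(natr1 n) -(natr1 k).
set x := n%:R; set y := k%:R.
have x_ge0 : 0 <= x by apply: ler0n.
have y_ge0 : 0 <= y by apply: ler0n.
have K_gt0 : 0 < (k`!)%:R :> rat by rewrite ltr0n fact_gt0.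
have E1_gt0 : 0 < poch (x + 7/6) k by apply: poch_gt0; lra.
have E2_gt0 : 0 < poch (3 * x + 3/2) k by apply: poch_gt0; lra.
(* the Pochhammer symbols at n are shifts of those at n+1 and conversely *)
have eA1 : poch (- (3 * x)) k =
    poch (- (3 * (x + 1))) k * (3 * x + 3 - y) * (3 * x + 2 - y) * (3 * x + 1 - y)
    / ((3 * x + 3) * (3 * x + 2) * (3 * x + 1)).
  have -> : - (3 * x) = - (3 * (x + 1)) + 1 + 1 + 1 by ring.
  rewrite !poch_succ; [field; nonzero|nonzero..].
have eA2 : poch (- x + 1/3) k = poch (- (x + 1) + 1/3) k * (x + 2/3 - y) / (x + 2/3).
  have -> : - x + 1/3 = - (x + 1) + 1/3 + 1 by field.
  rewrite poch_succ; [field; nonzero|nonzero].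
have eE1 : poch (x + 1 + 7/6) k = poch (x + 7/6) k * (x + 7/6 + y) / (x + 7/6).
  rewrite addrAC poch_succ //; nonzero.
have eE2 : poch (3 * (x + 1) + 3/2) k = poch (3 * x + 3/2) k
    * (3 * x + 3/2 + y) * (3 * x + 5/2 + y) * (3 * x + 7/2 + y)
    / ((3 * x + 3/2) * (3 * x + 5/2) * (3 * x + 7/2)).
  have -> : 3 * (x + 1) + 3/2 = 3 * x + 3/2 + 1 + 1 + 1 by field.
  rewrite !poch_succ; [field; nonzero|nonzero..].
rewrite eA1 eA2 eE1 eE2 /rec_num /rec_den /cert_den /cert_poly.
field; nonzero.
Qed.

(* G vanishes at both ends of the summation range: at k = 0 through the factor
   y of the certificate, past 3(n+1) through (-3(n+1))_k. *)
Lemma G0 (n : nat) : G n 0 = 0.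
Proof. by rewrite /G [cert _ _]mul0r mulr0. Qed.

Lemma G_end (n : nat) : G n (3 * n.+1).+1 = 0.
Proof. by rewrite /G hterm_vanish // mul0r. Qed.

Lemma S_rec (n : nat) : S n.+1 = rec_num n%:R / rec_den n%:R * S n.
Proof.
rewrite {1}/S.
under eq_bigr => k _ do rewrite telescoping_identity.
rewrite big_split /= -mulr_sumr sum_term5_trunc; last by rewrite ltnS mulnS leq_addl.
rewrite -(big_mkord xpredT (fun k => G n k.+1 - G n k)) telescope_sumr //.
by rewrite G_end G0 subr0 add0r.
Qed.

Definition closed_form (n : nat) : rat :=
  (27 / 256) ^+ n *
  (poch (5/6) n * poch (1/2) n * poch (7/6) n ^+ 2) /
  (poch (25/24) n * poch (7/24) n * poch (13/24) n * poch (19/24) n).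

Lemma closed_form_rec (n : nat) :
  closed_form n.+1 = rec_num n%:R / rec_den n%:R * closed_form n.
Proof.
rewrite /closed_form /rec_num /rec_den !pochS exprS.
have x_ge0 : 0 <= n%:R :> rat by apply: ler0n.
have Q1 : 0 < poch (25/24) n by apply: poch_gt0; lra.
have Q2 : 0 < poch (7/24) n by apply: poch_gt0; lra.
have Q3 : 0 < poch (13/24) n by apply: poch_gt0; lra.
have Q4 : 0 < poch (19/24) n by apply: poch_gt0; lra.
field; nonzero.
Qed.

Lemma S_closed_form (n : nat) : S n = closed_form n.
Proof.
elim: n => [|n IH]; last by rewrite S_rec closed_form_rec IH.
by rewrite /S -(big_mkord xpredT) big_nat1 /term5 /closed_form !poch0 fact0; field.
Qed.

Theorem theorem5 (n N : nat) (hN : (3 * n < N)%N) :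
  \sum_(k < N) term5 n k =
  (27 / 256) ^+ n *
  (poch (5/6) n * poch (1/2) n * poch (7/6) n ^+ 2) /
  (poch (25/24) n * poch (7/24) n * poch (13/24) n * poch (19/24) n).
Proof. by rewrite sum_term5_trunc // S_closed_form. Qed.
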